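(* Let $T\in\mathbb{R}^{n\times n\times n}$ with trilinear form $f(x,y,z)=\sum_{i,j,k}T_{ijk}x_iy_jz_k$ and $z$-slices $Z_1,\dots,Z_n$. Then $f$ can be written $f(x,y,z)=g(Ax,By,Cz)$ with $A,B\in M_n(\mathbb{R})$ orthogonal, $C\in M_n(\mathbb{R})$ arbitrary, and $g(x,y,z)=\sum_{i=1}^n\alpha_ix_iy_iz_i$ ($\alpha_i\in\mathbb{R}$), if and only if the matrices $Z_kZ_l^T$ and $Z_k^TZ_l$ are symmetric for all $k,l\in\{1,\dots,n\}$.
   Context: The $z$-slices of $T$ are the matrices $Z_k=(T_{ijk})_{1\le i,j\le n}$, i.e. the matrices of the bilinear forms $\partial f/\partial z_k$ in $(x,y)$. A real matrix $A$ is orthogonal if $A^TA=\mathrm{Id}$. *)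

(* Reals are modelled by an arbitrary real closed field. *)
From HB Require Import structures.
From mathcomp Require Import all_boot all_order all_algebra.
Set Implicit Arguments. Unset Strict Implicit. Unset Printing Implicit Defensive.
Import Order.TTheory GRing.Theory Num.Theory.
Local Open Scope ring_scope.

Definition trilin {R : rcfType} {n : nat} (T : 'I_n -> 'I_n -> 'I_n -> R)
  (x y z : 'cV[R]_n) : R :=
  \sum_(i < n) \sum_(j < n) \sum_(k < n) T i j k * x i 0 * y j 0 * z k 0.

Definition diag_trilin {R : rcfType} {n : nat} (alpha : 'I_n -> R)
  (x y z : 'cV[R]_n) : R :=
  \sum_(i < n) alpha i * x i 0 * y i 0 * z i 0.

Definition zslice {R : rcfType} {n : nat} (T : 'I_n -> 'I_n -> 'I_n -> R)
  (k : 'I_n) : 'M[R]_n := \matrix_(i, j) T i j k.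

Definition orthogonal_mx {R : rcfType} {n : nat} (A : 'M[R]_n) : Prop :=
  A^T *m A = 1%:M.

Definition symmetric_mx {R : rcfType} {n : nat} (M : 'M[R]_n) : Prop :=
  M^T = M.

From HB Require Import structures.
From mathcomp Require Import all_boot all_order all_algebra.
From mathcomp.real_closed Require Import complex.
From mathcomp Require Import ring.
Set Implicit Arguments. Unset Strict Implicit. Unset Printing Implicit Defensive.
Import Order.TTheory GRing.Theory Num.Theory.
Local Open Scope ring_scope.

(* A decomposition f(x,y,z) = g(Ax,By,Cz) with A, B orthogonal and g diagonal
   says exactly that T_ijk = sum_l alpha_l A_li B_lj C_lk, i.e. that every
   z-slice is Z_k = A^T D_k B with D_k diagonal: the slices admit a
   simultaneous singular value decomposition.  The forward implication is then
   a computation (Z_k Z_l^T = A^T D_k D_l A is symmetric, and likewise for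
   Z_k^T Z_l).  For the converse we prove the simultaneous SVD theorem for any
   family of square real matrices whose products Z_k Z_l^T, Z_k^T Z_l are all
   symmetric, by induction on the size:
   - the dilations H_k = [0 Z_k; Z_k^T 0] are pairwise commuting symmetric
     matrices, so they have a common eigenvector (x, y) lying in the range of a
     nonzero H_k0 (real spectral facts are obtained from an eigenvalue over
     R[i]); suitably normalised, (x, y) is a common singular pair of the Z_k;
   - Householder reflections complete x and y to orthogonal matrices P, Q, and
     P Z_k Q^T = diag(d_k, Z'_k) where the Z'_k satisfy the same hypothesis. *)

Section SimultaneousSVD.
Variable R : rcfType.

Definition sqnorm m (v : 'rV[R]_m) : R := (v *m v^T) 0 0.

Lemma sqnormE m (v : 'rV[R]_m) : sqnorm v = \sum_i v 0 i ^+ 2.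
Proof. by rewrite /sqnorm mxE; apply: eq_bigr => i _; rewrite mxE expr2. Qed.

Lemma sqnorm_ge0 m (v : 'rV[R]_m) : 0 <= sqnorm v.
Proof. by rewrite sqnormE sumr_ge0 // => i _; rewrite sqr_ge0. Qed.

Lemma sqnorm_eq0 m (v : 'rV[R]_m) : (sqnorm v == 0) = (v == 0).
Proof.
apply/idP/idP => [|/eqP->]; last by rewrite /sqnorm mul0mx mxE.
rewrite sqnormE => /eqP /psumr_eq0P v0; apply/eqP/rowP => i; rewrite mxE.
by apply/eqP; rewrite -sqrf_eq0; apply/eqP/v0 => // j _; rewrite sqr_ge0.
Qed.

Lemma sqnormZ m a (v : 'rV[R]_m) : sqnorm (a *: v) = a ^+ 2 * sqnorm v.
Proof. by rewrite /sqnorm linearZ /= -scalemxAl -scalemxAr !mxE mulrA expr2. Qed.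

Lemma sqnorm_delta m (i : 'I_m) : sqnorm (delta_mx 0 i) = 1.
Proof. by rewrite /sqnorm -rowE !mxE !eqxx. Qed.

Lemma sqnorm_normalize m (v : 'rV[R]_m) :
  0 < sqnorm v -> sqnorm ((Num.sqrt (sqnorm v))^-1 *: v) = 1.
Proof. by move=> v_gt0; rewrite sqnormZ exprVn sqr_sqrtr ?ltW // mulVf ?gt_eqF. Qed.

Lemma trmx11 (X : 'M[R]_1) : X^T = X.
Proof. by apply/matrixP => i j; rewrite !ord1 mxE. Qed.

(* Entrywise differences, without unfolding the entries themselves. *)
Lemma mxE_sub p q (A B : 'M[R]_(p, q)) i j : (A - B) i j = A i j - B i j.
Proof. by rewrite !mxE. Qed.

Lemma dot_sym m (u v : 'rV[R]_m) : u *m v^T = v *m u^T.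
Proof. by rewrite -[LHS]trmx11 trmx_mul trmxK. Qed.

Lemma ReM (x y : R[i]) :
  complex.Re (x * y) = complex.Re x * complex.Re y - complex.Im x * complex.Im y.
Proof. by case: x => a b; case: y. Qed.

Lemma ImM (x y : R[i]) :
  complex.Im (x * y) = complex.Re x * complex.Im y + complex.Im x * complex.Re y.
Proof. by case: x => a b; case: y. Qed.

(* A complex eigenvector of a real matrix gives, through its real and
   imaginary parts, a real invariant plane on which M acts by a similarity. *)
Lemma real_invariant_plane r (M : 'M[R]_r) : (0 < r)%N ->
  exists (a b : R) (p q : 'rV[R]_r), [/\ p != 0 \/ q != 0,
    p *m M = a *: p - b *: q & q *m M = b *: p + a *: q].
Proof.
move=> r_gt0.
have : size (char_poly (map_mx (real_complex R) M)) != 1%N.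
  by rewrite size_char_poly; case: r r_gt0 {M}.
case/closed_rootP => mu; rewrite -eigenvalue_root_char.
case/eigenvalueP => w w_eig w_neq0.
have w_col j : \sum_i w 0 i * (M i j)%:C%C = mu * w 0 j.
  by have := congr1 (fun v : 'rV__ => v 0 j) w_eig; rewrite !mxE => <-;
     apply: eq_bigr => i _; rewrite mxE.
exists (complex.Re mu), (complex.Im mu).
exists (map_mx (@complex.Re R) w), (map_mx (@complex.Im R) w); split.
- apply/orP; rewrite -negb_and; apply: contra w_neq0 => /andP[/eqP re0 /eqP im0].
  apply/eqP/rowP => j; have := congr1 (fun v : 'rV__ => v 0 j) re0.
  have := congr1 (fun v : 'rV__ => v 0 j) im0; rewrite !mxE.
  by case: (w 0 j) => a b /= -> ->.
- apply/rowP => j; have := congr1 (@complex.Re R) (w_col j).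
  rewrite !mxE (ReM mu) (raddf_sum (@complex.Re R : Rcomplex R -> R)) => <-.
  by apply: eq_bigr => i _; rewrite mxE; case: (w 0 i) => a b /=; rewrite mulr0 subr0.
- apply/rowP => j; have := congr1 (@complex.Im R) (w_col j).
  rewrite !mxE (ImM mu) (raddf_sum (@complex.Im R : Rcomplex R -> R)) addrC => <-.
  by apply: eq_bigr => i _; rewrite mxE; case: (w 0 i) => a b /=; rewrite mulr0 add0r.
Qed.

Lemma symmetric_no_rotation m (H : 'M[R]_m) (P Q : 'rV[R]_m) a b :
  symmetric_mx H -> P *m H = a *: P - b *: Q -> Q *m H = b *: P + a *: Q ->
  b = 0 \/ (P = 0 /\ Q = 0).
Proof.
move=> sH hP hQ.
have HPQ : P *m H *m Q^T = Q *m H *m P^T.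
  by rewrite -[RHS]trmx11 !trmx_mul trmxK sH mulmxA.
rewrite hP hQ mulmxBl mulmxDl -!scalemxAl (dot_sym Q P) in HPQ.
have : b * (sqnorm P + sqnorm Q) = 0.
  move: (congr1 (fun X : 'M_1 => X 0 0) HPQ); rewrite /sqnorm.
  move: (P *m P^T) (P *m Q^T) (Q *m Q^T) => z x y; rewrite !mxE => e.
  have -> : b * (z 0 0 + y 0 0) = (b * z 0 0 + a * x 0 0) - (a * x 0 0 - b * y 0 0)
    by ring.
  by rewrite e subrr.
move/eqP; rewrite mulf_eq0 paddr_eq0 ?sqnorm_ge0 // !sqnorm_eq0.
by case/orP => [/eqP|/andP[/eqP P0 /eqP Q0]]; [left | right].
Qed.

(* A symmetric matrix stabilising a nonzero subspace E has an eigenvector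
   in E: restrict to E, take an invariant plane and use the lemma above. *)
Lemma sym_eigenvector m (H : 'M[R]_m) k (E : 'M[R]_(k, m)) :
  symmetric_mx H -> E != 0 -> (E *m H <= E)%MS ->
  exists a (u : 'rV_m), [/\ u != 0, (u <= E)%MS & u *m H = a *: u].
Proof.
move=> sH E_neq0 EH_sub; set rb := row_base E.
have rank_gt0 : (0 < \rank E)%N by rewrite lt0n mxrank_eq0.
have restrict : rb *m H *m pinvmx rb *m rb = rb *m H.
  by rewrite mulmxKpV // stablemx_row_base.
have [a [b [p [q [pq_neq0 hp hq]]]]] :=
  real_invariant_plane (rb *m H *m pinvmx rb) rank_gt0.
have hP : p *m rb *m H = a *: (p *m rb) - b *: (q *m rb).
  by rewrite -mulmxA -restrict mulmxA hp mulmxBl !scalemxAl.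
have hQ : q *m rb *m H = b *: (p *m rb) + a *: (q *m rb).
  by rewrite -mulmxA -restrict mulmxA hq mulmxDl !scalemxAl.
have PQ_neq0 : p *m rb != 0 \/ q *m rb != 0.
  by rewrite !mulmx_free_eq0 ?row_base_free.
have in_E (x : 'rV_(\rank E)) : (x *m rb <= E)%MS by rewrite -(eq_row_base E) submxMl.
have [b0|[P0 Q0]] := symmetric_no_rotation sH hP hQ; last first.
  by case: PQ_neq0; rewrite ?P0 ?Q0 eqxx.
exists a; case: PQ_neq0 => [P_neq0|Q_neq0].
  by exists (p *m rb); rewrite hP b0 scale0r subr0.
by exists (q *m rb); rewrite hQ b0 scale0r add0r.
Qed.

(* Pairwise commuting symmetric matrices stabilising a nonzero subspace E
   have a common eigenvector in E; induction refines E by eigenspaces. *)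
Lemma common_sym_eigenvector m (I : finType) (H : I -> 'M[R]_m)
    k (E : 'M[R]_(k, m)) :
  (forall i, symmetric_mx (H i)) -> (forall i j, H i *m H j = H j *m H i) ->
  E != 0 -> (forall i, (E *m H i <= E)%MS) ->
  exists2 u : 'rV_m, u != 0 & (u <= E)%MS /\ forall i, exists a, u *m H i = a *: u.
Proof.
move=> sH cH; suff common (s : seq I) k' (E' : 'M[R]_(k', m)) :
    E' != 0 -> (forall i, (E' *m H i <= E')%MS) ->
    exists2 u : 'rV_m, u != 0 &
      (u <= E')%MS /\ forall i, i \in s -> exists a, u *m H i = a *: u.
  move=> E_neq0 /(common (enum I) _ _ E_neq0) [u u_neq0 [uE hu]].
  by exists u => //; split => // i; apply: hu; rewrite mem_enum.
elim: s k' E' => [|i s IH] k' E' E_neq0 sE.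
  by have [u uE u_neq0] := rowV0Pn E_neq0; exists u.
have [a [u0 [u0_neq0 u0E hu0]]] := sym_eigenvector (sH i) E_neq0 (sE i).
set F := (E' :&: eigenspace (H i) a)%MS.
have F_neq0 : F != 0.
  apply: contraNneq u0_neq0 => F0; rewrite -submx0 -F0 sub_capmx u0E.
  by apply/eigenspaceP.
have sF j : (F *m H j <= F)%MS.
  rewrite sub_capmx (submx_trans (submxMr _ (capmxSl _ _)) (sE j)) /=.
  exact: submx_trans (submxMr _ (capmxSr _ _)) (comm_mx_stable_eigenspace a (cH i j)).
have [u u_neq0 [uF hu]] := IH _ _ F_neq0 sF.
exists u => //; split; first exact: submx_trans uF (capmxSl _ _).
move=> j; rewrite inE => /orP [/eqP ->|js]; last exact: hu.
by exists a; apply/eigenspaceP; apply: submx_trans uF (capmxSr _ _).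
Qed.

(* The dilation [0 Z; Z^T 0] of a rectangular matrix Z: its eigenvectors
   encode pairs of singular vectors of Z. *)
Definition dilation m n (Z : 'M[R]_(m, n)) : 'M[R]_(m + n) := block_mx 0 Z Z^T 0.

Lemma dilation_sym m n (Z : 'M[R]_(m, n)) : symmetric_mx (dilation Z).
Proof. by rewrite /symmetric_mx /dilation tr_block_mx !trmx0 trmxK. Qed.

Lemma dilationM m n (Z Z' : 'M[R]_(m, n)) :
  dilation Z *m dilation Z' = block_mx (Z *m Z'^T) 0 0 (Z^T *m Z').
Proof. by rewrite mulmx_block !mulmx0 !mul0mx !addr0 !add0r. Qed.

Lemma dilation_eigenvector m n (Z : 'M[R]_(m, n)) (x : 'rV_m) (y : 'rV_n) a :
  row_mx x y *m dilation Z = a *: row_mx x y ->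
  [/\ x *m Z = a *: y, y *m Z^T = a *: x & a != 0 -> sqnorm x = sqnorm y].
Proof.
rewrite mul_row_block !mulmx0 add0r addr0 scale_row_mx.
case/eq_row_mx => yZ xZ; split => // a_neq0.
have : x *m Z *m y^T = y *m Z^T *m x^T.
  by rewrite -[RHS]trmx11 !trmx_mul !trmxK mulmxA.
rewrite xZ yZ -!scalemxAl => /(congr1 (fun X : 'M_1 => X 0 0)).
by rewrite [LHS]mxE [RHS]mxE => /(mulfI a_neq0).
Qed.

(* An eigenvector of a symmetric matrix H lying in the row space of H has a
   nonzero eigenvalue: if w = D H and w H = 0 then w w^T = D (w H)^T = 0. *)
Lemma sym_eigenvalue_neq0 m (H : 'M[R]_m) (w : 'rV[R]_m) a :
  symmetric_mx H -> w != 0 -> (w <= H)%MS -> w *m H = a *: w -> a != 0.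
Proof.
move=> sH w_neq0 /submxP [D wD] w_eig; apply: contraNneq w_neq0 => a0.
rewrite -sqnorm_eq0 /sqnorm {1}wD -mulmxA -sH -trmx_mul.
by rewrite w_eig a0 scale0r trmx0 mulmx0 mxE.
Qed.

Definition sym_products p m (Z : 'I_p -> 'M[R]_m) : Prop :=
  forall k l, symmetric_mx (Z k *m (Z l)^T) /\ symmetric_mx ((Z k)^T *m Z l).

(* Under this hypothesis the dilations of the Z_k pairwise commute, since
   dilation(Z_k) dilation(Z_l) = diag(Z_k Z_l^T, Z_k^T Z_l). *)
Lemma sym_products_dilation_comm p m (Z : 'I_p -> 'M[R]_m) k l :
  sym_products Z -> dilation (Z k) *m dilation (Z l) = dilation (Z l) *m dilation (Z k).
Proof.
move=> /(_ k l) [sZZt sZtZ]; rewrite !dilationM.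
by rewrite -[Z k *m _]sZZt -[_ *m Z l]sZtZ !trmx_mul !trmxK.
Qed.

Lemma common_singular_pair m p (Z : 'I_p -> 'M[R]_m.+1) : sym_products Z ->
  exists (u v : 'rV[R]_m.+1) (d : 'I_p -> R), [/\ sqnorm u = 1, sqnorm v = 1,
    forall k, u *m Z k = d k *: v & forall k, v *m (Z k)^T = d k *: u].
Proof.
move=> sZ; have [Z0|] := boolP [forall k, Z k == 0].
  have Zk0 k : Z k = 0 := eqP (forallP Z0 k).
  exists (delta_mx 0 0), (delta_mx 0 0), (fun=> 0).
  by split=> [||k|k]; rewrite ?sqnorm_delta ?Zk0 ?trmx0 ?mulmx0 ?scale0r.
rewrite negb_forall => /existsP [k0 Zk0_neq0]; pose H k := dilation (Z k).
have H0_neq0 : H k0 != 0.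
  apply: contraNneq Zk0_neq0 => H0; apply/eqP/matrixP => i j.
  have := congr1 (fun M : 'M_(_ + _) => M (lshift _ i) (rshift _ j)) H0.
  by rewrite /H block_mxEur !mxE.
have H0_stable k : (H k0 *m H k <= H k0)%MS.
  by rewrite sym_products_dilation_comm // submxMl.
have [w w_neq0 [wH0 /fin_all_exists [lam w_eig]]] :=
  common_sym_eigenvector (fun k => dilation_sym (Z k))
    (fun k l => sym_products_dilation_comm k l sZ) H0_neq0 H0_stable.
set x := lsubmx w; set y := rsubmx w.
have xy_eig k : row_mx x y *m dilation (Z k) = lam k *: row_mx x y.
  by rewrite hsubmxK w_eig.
have [_ _ eq_norm] := dilation_eigenvector (xy_eig k0).
have lam0_neq0 : lam k0 != 0 := sym_eigenvalue_neq0 (dilation_sym _) w_neq0 wH0 (w_eig k0).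
have x_gt0 : 0 < sqnorm x.
  rewrite lt_def sqnorm_ge0 andbT; apply: contraNneq w_neq0 => x0.
  rewrite -sqnorm_eq0 /sqnorm -(hsubmxK w) tr_row_mx mul_row_col mxE.
  by rewrite -/(sqnorm x) -/(sqnorm y) -(eq_norm lam0_neq0) x0 addr0.
set c := (Num.sqrt (sqnorm x))^-1.
exists (c *: x), (c *: y), lam; split.
- exact: sqnorm_normalize.
- by rewrite /c (eq_norm lam0_neq0) sqnorm_normalize // -(eq_norm lam0_neq0).
- move=> k; have [xZ _ _] := dilation_eigenvector (xy_eig k).
  by rewrite -scalemxAl xZ !scalerA mulrC.
- move=> k; have [_ yZ _] := dilation_eigenvector (xy_eig k).
  by rewrite -scalemxAl yZ !scalerA mulrC.
Qed.

Lemma orthogonal_mxC m (A : 'M[R]_m) : orthogonal_mx A -> A *m A^T = 1%:M.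
Proof. exact: mulmx1C. Qed.

Lemma orthogonal_mxM m (A B : 'M[R]_m) :
  orthogonal_mx A -> orthogonal_mx B -> orthogonal_mx (A *m B).
Proof.
rewrite /orthogonal_mx => oA oB.
by rewrite trmx_mul mulmxA -(mulmxA _ A^T) oA mulmx1 oB.
Qed.

(* The Householder reflection across the hyperplane orthogonal to w (the
   identity when w = 0). *)
Definition reflector m (w : 'rV[R]_m) : 'M[R]_m :=
  1%:M - (2 / sqnorm w) *: (w^T *m w).

Lemma reflector_orthogonal m (w : 'rV[R]_m) : orthogonal_mx (reflector w).
Proof.
set c := sqnorm w; set X := w^T *m w.
have XX : X *m X = c *: X.
  by rewrite /X mulmxA -(mulmxA _ w) [w *m w^T]mx11_scalar mul_mx_scalar -scalemxAl.
have XT : X^T = X by rewrite /X trmx_mul trmxK.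
have coef : 2 / c * (2 / c) * c = 2 / c + 2 / c.
  by have [->|c_neq0] := eqVneq c 0; [rewrite invr0 !mulr0 addr0 | field].
have sym : (1%:M - (2 / c) *: X)^T = 1%:M - (2 / c) *: X.
  by rewrite linearB /= trmx1 linearZ /= XT.
rewrite /orthogonal_mx /reflector -/c -/X sym.
rewrite mulmxBl mulmxBr !mulmx1 mul1mx mulmxBr mulmx1 -scalemxAl -scalemxAr XX.
by rewrite !scalerA coef scalerDl opprB addrK subrK.
Qed.

Lemma reflector_swap m (x y : 'rV[R]_m) :
  sqnorm x = sqnorm y -> x *m reflector (y - x) = y.
Proof.
move=> xy; have [->|xy_neq] := eqVneq x y.
  by rewrite subrr /reflector mulmx0 scaler0 subr0 mulmx1.
set w := y - x; set c := sqnorm w.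
have xw : (x *m w^T) 0 0 = (x *m y^T) 0 0 - sqnorm x.
  by rewrite /w linearB /= mulmxBr mxE_sub.
have cE : c = 2 * (sqnorm x - (x *m y^T) 0 0).
  rewrite /c /w /sqnorm linearB /= mulmxBl !mulmxBr (dot_sym y x) !mxE_sub.
  by rewrite -/(sqnorm x) -/(sqnorm y) -xy; ring.
have c_neq0 : c != 0 by rewrite /c sqnorm_eq0 subr_eq0 eq_sym.
rewrite /reflector mulmxBr mulmx1 -scalemxAr mulmxA [x *m w^T]mx11_scalar.
rewrite mul_scalar_mx scalerA xw.
have -> : 2 / c * ((x *m y^T) 0 0 - sqnorm x) = -1.
  by rewrite cE; field; apply: contra_neq c_neq0 => d0; rewrite cE d0 mulr0.
by rewrite scaleN1r opprK /w addrC subrK.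
Qed.

Lemma orthogonal_first_row m (u : 'rV[R]_m.+1) : sqnorm u = 1 ->
  exists P : 'M[R]_m.+1, orthogonal_mx P /\ delta_mx 0 0 *m P = u.
Proof.
move=> u1; exists (reflector (u - delta_mx 0 0)); split.
  exact: reflector_orthogonal.
by rewrite reflector_swap // sqnorm_delta.
Qed.

Lemma diag_blockM m (a b : R) (X Y : 'M[R]_m) :
  block_mx a%:M 0 0 X *m block_mx b%:M 0 0 Y =
  block_mx (a * b)%:M 0 0 (X *m Y) :> 'M_(1 + m).
Proof. by rewrite mulmx_block !mulmx0 !mul0mx !addr0 add0r -scalar_mxM. Qed.

Lemma diag_blockT m (a : R) (X : 'M[R]_m) :
  (block_mx a%:M 0 0 X)^T = block_mx a%:M 0 0 X^T :> 'M_(1 + m).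
Proof. by rewrite tr_block_mx !trmx0 tr_scalar_mx. Qed.

Lemma orthogonal_diag_block m (A : 'M[R]_m) :
  orthogonal_mx A -> orthogonal_mx (block_mx 1%:M 0 0 A : 'M_(1 + m)).
Proof.
by rewrite /orthogonal_mx diag_blockT diag_blockM => ->; rewrite mulr1 -scalar_mx_block.
Qed.

Lemma block_first_row_col m (Y : 'M[R]_m.+1) d :
  let e : 'rV[R]_m.+1 := delta_mx 0 0 in
  e *m Y = d *: e -> Y *m e^T = d *: e^T ->
  Y = block_mx d%:M 0 0 (drsubmx (Y : 'M_(1 + m))) :> 'M_(1 + m).
Proof.
move=> e Y_row Y_col.
have row0 j : Y 0 j = d * (j == 0)%:R.
  by have := congr1 (fun v : 'rV__ => v 0 j) Y_row; rewrite -rowE !mxE eq_sym.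
have col0 i : Y i 0 = d * (i == 0)%:R.
  have := congr1 (fun v : 'cV__ => v i 0) Y_col.
  by rewrite trmx_delta -colE !mxE eqxx andbT.
have lshift0 : lshift m (0 : 'I_1) = 0 by apply: val_inj.
rewrite -{1}(submxK (Y : 'M_(1 + m))); congr block_mx.
- by apply/matrixP => i j; rewrite !ord1 !mxE lshift0 row0 eqxx mulr1.
- by apply/matrixP => i j; rewrite !ord1 !mxE lshift0 row0 mulr0.
- by apply/matrixP => i j; rewrite !ord1 !mxE lshift0 col0 mulr0.
Qed.

Lemma symmetric_conj m n (P : 'M[R]_(m, n)) (X : 'M[R]_n) :
  symmetric_mx X -> symmetric_mx (P *m X *m P^T).
Proof. by rewrite /symmetric_mx !trmx_mul trmxK => ->; rewrite mulmxA. Qed.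

Lemma sym_products_conj p m (P Q : 'M[R]_m) (Z : 'I_p -> 'M[R]_m) :
  orthogonal_mx P -> orthogonal_mx Q -> sym_products Z ->
  sym_products (fun k => P *m Z k *m Q^T).
Proof.
move=> oP oQ sZ k l; have [sZZt sZtZ] := sZ k l.
have -> : P *m Z k *m Q^T *m (P *m Z l *m Q^T)^T = P *m (Z k *m (Z l)^T) *m P^T.
  by rewrite !trmx_mul trmxK !mulmxA -(mulmxA _ Q^T) oQ mulmx1.
have -> : (P *m Z k *m Q^T)^T *m (P *m Z l *m Q^T) = Q *m ((Z k)^T *m Z l) *m Q^T.
  by rewrite !trmx_mul trmxK !mulmxA -(mulmxA _ P^T) oP mulmx1.
by split; apply: symmetric_conj.
Qed.

Lemma symmetric_diag_block m a (X : 'M[R]_m) :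
  symmetric_mx (block_mx a%:M 0 0 X : 'M_(1 + m)) -> symmetric_mx X.
Proof. by rewrite /symmetric_mx diag_blockT => /(congr1 drsubmx); rewrite !block_mxKdr. Qed.

Lemma sym_products_diag_block p m (Y : 'I_p -> 'M[R]_(1 + m)) (d : 'I_p -> R)
    (Z : 'I_p -> 'M[R]_m) :
  (forall k, Y k = block_mx (d k)%:M 0 0 (Z k)) -> sym_products Y -> sym_products Z.
Proof.
move=> hY sY k l; have [] := sY k l; rewrite !hY !diag_blockT !diag_blockM.
by move=> /symmetric_diag_block sZZt /symmetric_diag_block.
Qed.

Lemma deflation m p (Z : 'I_p -> 'M[R]_m.+1) : sym_products Z ->
  exists (P Q : 'M[R]_m.+1) (d : 'I_p -> R) (Z' : 'I_p -> 'M[R]_m),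
    [/\ orthogonal_mx P, orthogonal_mx Q, sym_products Z' &
        forall k, P *m Z k *m Q^T = block_mx (d k)%:M 0 0 (Z' k) :> 'M_(1 + m)].
Proof.
move=> sZ; have [u [v [d [u1 v1 uZ vZ]]]] := common_singular_pair sZ.
have [P [oP Pu]] := orthogonal_first_row u1.
have [Q [oQ Qv]] := orthogonal_first_row v1.
pose Y k := P *m Z k *m Q^T; pose e : 'rV[R]_m.+1 := delta_mx 0 0.
have Y_row k : e *m Y k = d k *: e.
  by rewrite /Y !mulmxA Pu uZ -scalemxAl -Qv -mulmxA orthogonal_mxC // mulmx1.
have Y_col k : Y k *m e^T = d k *: e^T.
  have Zv : Z k *m v^T = d k *: u^T by rewrite -[Z k]trmxK -trmx_mul vZ linearZ.
  rewrite /Y -mulmxA -trmx_mul Qv -mulmxA Zv -Pu trmx_mul -scalemxAr mulmxA.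
  by rewrite orthogonal_mxC // mul1mx.
have Y_block k := block_first_row_col (Y_row k) (Y_col k).
exists P, Q, d, (fun k => drsubmx (Y k : 'M_(1 + m))); split => //.
exact: sym_products_diag_block Y_block (sym_products_conj oP oQ sZ).
Qed.

Theorem simultaneous_svd m p (Z : 'I_p -> 'M[R]_m) : sym_products Z ->
  exists A B : 'M[R]_m,
    [/\ orthogonal_mx A, orthogonal_mx B & forall k, is_diag_mx (A *m Z k *m B^T)].
Proof.
elim: m Z => [|m IH] Z sZ.
  exists 1%:M, 1%:M; rewrite /orthogonal_mx trmx1 mulmx1.
  by split => // k; apply/is_diag_mxP => -[].
have [P [Q [d [Z' [oP oQ sZ' PZQ]]]]] := deflation sZ.
have [A' [B' [oA' oB' diagZ']]] := IH Z' sZ'.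
exists ((block_mx 1%:M 0 0 A' : 'M_(1 + m)) *m P).
exists ((block_mx 1%:M 0 0 B' : 'M_(1 + m)) *m Q); split.
- exact: orthogonal_mxM (orthogonal_diag_block oA') oP.
- exact: orthogonal_mxM (orthogonal_diag_block oB') oQ.
move=> k; set A1 := block_mx _ _ _ A'; set B1 := block_mx _ _ _ B'.
have -> : A1 *m P *m Z k *m (B1 *m Q)^T = A1 *m (P *m Z k *m Q^T) *m B1^T.
  by rewrite trmx_mul !mulmxA.
rewrite (PZQ k) /A1 /B1 diag_blockT !diag_blockM mul1r mulr1.
have := @is_diag_block_mx _ 1 m 1 m (d k)%:M 0 0 (A' *m Z' k *m B'^T) erefl.
by rewrite mx11_is_diag diagZ' !eqxx; apply.
Qed.

Lemma orthogonal_mx_tr m (A : 'M[R]_m) : orthogonal_mx A -> orthogonal_mx A^T.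
Proof. by rewrite /orthogonal_mx trmxK; exact: orthogonal_mxC. Qed.

Lemma sym_products_diag p n (D : 'I_p -> 'rV[R]_n) :
  sym_products (fun k => diag_mx (D k)).
Proof. by move=> k l; rewrite /symmetric_mx !tr_diag_mx mulmx_diag tr_diag_mx. Qed.

Lemma sym_products_svd p n (A B : 'M[R]_n) (D : 'I_p -> 'rV[R]_n) :
  orthogonal_mx A -> orthogonal_mx B ->
  sym_products (fun k => A^T *m diag_mx (D k) *m B).
Proof.
move=> oA oB; have := sym_products_conj (orthogonal_mx_tr oA) (orthogonal_mx_tr oB)
  (sym_products_diag D).
by rewrite trmxK.
Qed.

Lemma diag_mx_entries n (M : 'M[R]_n) : is_diag_mx M -> M = diag_mx (\row_i M i i).
Proof.
move/is_diag_mxP => M_diag; apply/matrixP => i j; rewrite !mxE.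
by have [->|ij] := eqVneq i j; [rewrite mulr1n | rewrite mulr0n M_diag].
Qed.

Lemma orthogonal_svdK n (A B Z : 'M[R]_n) :
  orthogonal_mx A -> orthogonal_mx B -> Z = A^T *m (A *m Z *m B^T) *m B.
Proof.
by move=> oA oB; rewrite !mulmxA oA mul1mx -mulmxA oB mulmx1.
Qed.

(* The tensor of a diagonal trilinear form composed with linear maps:
   T_ijk = sum_l alpha_l A_li B_lj C_lk. *)
Definition decomp_tensor n (alpha : 'I_n -> R) (A B C : 'M[R]_n) (i j k : 'I_n) : R :=
  \sum_l alpha l * A l i * B l j * C l k.

Lemma mulr_sum3 n (f g h : 'I_n -> R) (a : R) :
  a * (\sum_i f i) * (\sum_j g j) * (\sum_k h k) =
  \sum_i \sum_j \sum_k a * f i * g j * h k.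
Proof.
rewrite [a * _]big_distrr /= [(\sum_i _) * _]big_distrl /= big_distrl /=.
apply: eq_bigr => i _; rewrite -mulrA [(\sum_j g j) * _]big_distrl big_distrr /=.
apply: eq_bigr => j _; rewrite !big_distrr /=.
by apply: eq_bigr => k _; rewrite !mulrA.
Qed.

Lemma diag_trilin_decomp n (alpha : 'I_n -> R) (A B C : 'M[R]_n) x y z :
  diag_trilin alpha (A *m x) (B *m y) (C *m z) =
  trilin (decomp_tensor alpha A B C) x y z.
Proof.
rewrite /diag_trilin /trilin; under eq_bigr do rewrite !mxE mulr_sum3.
rewrite exchange_big; apply: eq_bigr => i _.
rewrite exchange_big; apply: eq_bigr => j _.
rewrite exchange_big; apply: eq_bigr => k _.
by rewrite /decomp_tensor !big_distrl; apply: eq_bigr => l _ /=; ring.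
Qed.

Lemma eq_trilin n (T T' : 'I_n -> 'I_n -> 'I_n -> R) x y z :
  (forall i j k, T i j k = T' i j k) -> trilin T x y z = trilin T' x y z.
Proof.
move=> TT'; apply: eq_bigr => i _; apply: eq_bigr => j _; apply: eq_bigr => k _.
by rewrite TT'.
Qed.

Lemma trilin_delta n (T : 'I_n -> 'I_n -> 'I_n -> R) i0 j0 k0 :
  trilin T (delta_mx i0 0) (delta_mx j0 0) (delta_mx k0 0) = T i0 j0 k0.
Proof.
rewrite /trilin (bigD1 i0) //= [X in _ + X]big1 ?addr0 => [|i ni]; last first.
  rewrite big1 // => j _; rewrite big1 // => k _.
  by rewrite [delta_mx i0 0 i 0]mxE (negbTE ni) /= mulr0 !mul0r.
rewrite (bigD1 j0) //= [X in _ + X]big1 ?addr0 => [|j nj]; last first.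
  by rewrite big1 // => k _; rewrite [delta_mx j0 0 j 0]mxE (negbTE nj) /= mulr0 mul0r.
rewrite (bigD1 k0) //= [X in _ + X]big1 ?addr0 => [|k nk]; last first.
  by rewrite [delta_mx k0 0 k 0]mxE (negbTE nk) /= mulr0.
by rewrite !mxE !eqxx /= !mulr1.
Qed.

Lemma zslice_decomp n (alpha : 'I_n -> R) (A B C : 'M[R]_n) k :
  zslice (decomp_tensor alpha A B C) k =
  A^T *m diag_mx (\row_l (alpha l * C l k)) *m B.
Proof.
apply/matrixP => i j; rewrite -mulmxA mul_diag_mx !mxE.
by apply: eq_bigr => l _; rewrite !mxE; ring.
Qed.

End SimultaneousSVD.

Unset Implicit Arguments.
Set Strict Implicit.

Theorem proposition34 (R : rcfType) (n : nat) (T : 'I_n -> 'I_n -> 'I_n -> R) :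
  (exists (A B C : 'M[R]_n) (alpha : 'I_n -> R),
      orthogonal_mx A /\ orthogonal_mx B /\
      forall x y z : 'cV[R]_n,
        trilin T x y z = diag_trilin alpha (A *m x) (B *m y) (C *m z))
  <->
  (forall k l : 'I_n,
      symmetric_mx (zslice T k *m (zslice T l)^T) /\
      symmetric_mx ((zslice T k)^T *m zslice T l)).
Proof.
split.
  move=> [A [B [C [alpha [oA [oB f_eq]]]]]].
  have T_eq i j k : T i j k = decomp_tensor alpha A B C i j k.
    have := f_eq (delta_mx i 0) (delta_mx j 0) (delta_mx k 0).
    by rewrite diag_trilin_decomp !trilin_delta.
  have Z_eq k : zslice T k = A^T *m diag_mx (\row_l (alpha l * C l k)) *m B.
    by rewrite -zslice_decomp; apply/matrixP => i j; rewrite !mxE T_eq.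
  move=> k l; rewrite !Z_eq.
  exact: (sym_products_svd (fun k => \row_l (alpha l * C l k)) oA oB k l).
move=> sZ; have [A [B [oA oB Z_diag]]] := simultaneous_svd sZ.
pose C := \matrix_(l, k) (A *m zslice T k *m B^T) l l.
exists A, B, C, (fun=> 1); do 2!split => //; move=> x y z.
rewrite diag_trilin_decomp; apply: eq_trilin => i j k.
have Z_eq : zslice T k = zslice (decomp_tensor (fun=> 1) A B C) k.
  rewrite zslice_decomp {1}(orthogonal_svdK (zslice T k) oA oB).
  rewrite (diag_mx_entries (Z_diag k)).
  by congr (_ *m diag_mx _ *m _); apply/rowP => l; rewrite !mxE mul1r.
by have := congr1 (fun M : 'M_n => M i j) Z_eq; rewrite !mxE.
Qed.
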